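(* Let $B$ be a Boolean algebra and let $U,V,W$ be CFG-spaces over $B$ with $U\cup V\subset W$ (the metrics on $U$ and $V$ being the restrictions of that of $W$), and let $F:U\to V$ be an isometry. Then there is an isometry $F':W\to W$ whose restriction to $U$ is $F$.
   Context: A Boolean metric space over a Boolean algebra $B$ is a set $X$ with a symmetric map $d:X\times X\to B$ such that $d(x,y)=0$ iff $x=y$, and $d(x,z)\le d(x,y)\vee d(y,z)$ for all $x,y,z$. A map $f:X\to Y$ between such spaces is contractive if $d(f(x),f(y))\le d(x,y)$ for all $x,y$; an isometry is a bijection with $d(f(x),f(y))=d(x,y)$ for all $x,y$. A partition of $B$ is a finite family $a_0,\dots,a_n$ of pairwise disjoint elements ($a_i\wedge a_j=0$ for $i\ne j$) with $a_0\vee\dots\vee a_n=1$. Given $x_0,\dots,x_n\in X$ and a partition $a_0,\dots,a_n$, an element $x\in X$ is a convex combination of the $x_i$ with coefficients $a_i$ if $a_i\wedge d(x,x_i)=0$ for all $i$. $X$ is convex if for every $x_0,\dots,x_n\in X$ and every partition $a_0,\dots,a_n$ of $B$ there exists such a convex combination in $X$; $X$ is finitely generated if there is a finite $S\subset X$ such that every element of $X$ is a convex combination of elements of $S$. A CFG-space is a convex, finitely generated Boolean metric space. *)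

(* A Boolean algebra is a complemented distributive lattice
   with top and bottom: ctbDistrLatticeType. *)
From HB Require Import structures.
From mathcomp Require Import all_boot all_order.
From Stdlib Require List.
Set Implicit Arguments. Unset Strict Implicit. Unset Printing Implicit Defensive.
Import Order.TTheory.
Local Open Scope order_scope.

Section BoolMetric.
Context {disp : Order.disp_t} {B : ctbDistrLatticeType disp}.

Definition is_bmetric (X : Type) (dist : X -> X -> B) : Prop :=
  (forall x y, dist x y = dist y x) /\
  (forall x y, dist x y = \bot <-> x = y) /\
  (forall x y z, dist x z <= dist x y `|` dist y z).

Definition is_partition (n : nat) (a : 'I_n.+1 -> B) : Prop :=
  (forall i j, i != j -> a i `&` a j = \bot) /\
  \join_(i < n.+1) a i = \top.

Definition is_convex_comb (X : Type) (dist : X -> X -> B) (n : nat)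
  (xs : 'I_n.+1 -> X) (a : 'I_n.+1 -> B) (x : X) : Prop :=
  forall i, a i `&` dist x (xs i) = \bot.

Definition is_convex (X : Type) (dist : X -> X -> B) : Prop :=
  forall (n : nat) (xs : 'I_n.+1 -> X) (a : 'I_n.+1 -> B),
    is_partition a -> exists x, is_convex_comb dist xs a x.

Definition is_fin_gen (X : Type) (dist : X -> X -> B) : Prop :=
  exists S : list X, forall x : X,
    exists (n : nat) (xs : 'I_n.+1 -> X) (a : 'I_n.+1 -> B),
      is_partition a /\ (forall i, List.In (xs i) S) /\
      is_convex_comb dist xs a x.

Definition is_CFG (X : Type) (dist : X -> X -> B) : Prop :=
  is_bmetric dist /\ is_convex dist /\ is_fin_gen dist.

Definition restr_dist (W : Type) (dist : W -> W -> B) (U : W -> Prop)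
  : {x | U x} -> {x | U x} -> B :=
  fun x y => dist (proj1_sig x) (proj1_sig y).

Definition is_isometry (X Y : Type) (dX : X -> X -> B) (dY : Y -> Y -> B)
  (f : X -> Y) : Prop :=
  bijective f /\ forall x y, dY (f x) (f y) = dX x y.

End BoolMetric.

From HB Require Import structures.
From mathcomp Require Import all_boot all_order.
From Stdlib Require Import ClassicalEpsilon.
Set Implicit Arguments. Unset Strict Implicit. Unset Printing Implicit Defensive.
Import Order.Theory.
Local Open Scope order_scope.

(* Write e x y := ~` d x y for the "agreement" of x and y; it is reflexive,
   symmetric and transitive in the lattice sense, and e x y = \top iff x = y.
   Fix generators s_1..s_k of W and g_1..g_m of U, and put f_l := F g_l.

   1. Refine \top into the partition of "cells" generated by all agreements
      e (s_i) (s_j), e (g_l) (s_j), e (f_l) (s_j): on each cell c every such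
      agreement is either >= c or disjoint from c.
   2. On a cell c, "c <= e (s_i) (s_j)" is an equivalence on indices; each g_l
      and f_l lies in the class of some generator, and F preserves the
      relation between these classes.  A finite sequence of class swaps then
      gives tau_c : 'I_k -> 'I_k preserving the relation, onto up to the
      relation, and sending the class of g_l to that of f_l.
   3. Gluing: F' x is the point that agrees, on cell c, with s (tau_c j)
      wherever x agrees with s j.  It exists by convexity, is unique, and is
      an isometry of W onto W.
   4. F' and F are isometries agreeing on the generators g_l of U; since
      convex combinations are unique, they agree on all of U. *)

(* Registers that meet distributes over join, so that the distributivity
   lemmas of bigop (big_distrr, bigA_distr_bigA) apply to Boolean algebras. *)
HB.instance Definition _ (disp : Order.disp_t) (B : ctbDistrLatticeType disp) :=
  Monoid.isAddLaw.Build B Order.meet Order.join (@meetUl _ B) (@meetUr _ B).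

(* Closes goals of the form  a1 `&` ... `&` an <= b1 `&` ... `&` bm  where every
   b is one of the a's. *)
Ltac meet_proj := first
  [ exact: lexx
  | rewrite lexI; apply/andP; split; meet_proj
  | apply: leIxl; meet_proj
  | apply: leIxr; meet_proj ].

Section BooleanAlgebra.
Context {disp : Order.disp_t} {B : ctbDistrLatticeType disp}.
Implicit Types a b c : B.

Definition is_fpartition (T : finType) (a : T -> B) : Prop :=
  (forall i j, i != j -> a i `&` a j = \bot) /\ \join_i a i = \top.

Lemma le_by_cover (T : finType) (c : T -> B) a b :
  \join_i c i = \top -> (forall i, a `&` c i <= b) -> a <= b.
Proof.
move=> hc h; rewrite -[a]meetx1 -hc big_distrr /=.
by apply/joinsP => i _; exact: h.
Qed.

Lemma fpartition_prod (T1 T2 : finType) (a : T1 -> B) (b : T2 -> B) :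
  is_fpartition a -> is_fpartition b ->
  is_fpartition (fun t : T1 * T2 => a t.1 `&` b t.2).
Proof.
move=> [ha1 ha2] [hb1 hb2]; split.
  move=> [i1 i2] [j1 j2] /=; rewrite xpair_eqE negb_and => /orP [h|h].
    by apply/eqP; rewrite -lex0 -(ha1 _ _ h) leI2 // leIl.
  by apply/eqP; rewrite -lex0 -(hb1 _ _ h) leI2 // leIr.
apply/le_anti; rewrite lex1 /=.
apply: (le_by_cover ha2) => i; apply: (le_by_cover hb2) => j.
rewrite meet1x.
exact: (@joins_sup _ _ _ (i, j) predT (fun t : T1 * T2 => a t.1 `&` b t.2)).
Qed.

Definition decides c b : bool := (c <= b) || (c <= ~` b).

Lemma decided_meet c b : decides c b -> c `&` b = if c <= b then c else \bot.
Proof.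
case: ifPn => [/meet_idPl //|hcb]; rewrite /decides (negbTE hcb) /= => hc.
by apply/eqP; rewrite disj_leC.
Qed.

Definition cell (I : finType) (t : I -> B) (f : {ffun I -> bool}) : B :=
  \meet_i (if f i then t i else ~` t i).

Lemma cell_le (I : finType) (t : I -> B) f i :
  cell t f <= (if f i then t i else ~` t i).
Proof. exact: (@meets_inf _ _ _ i predT (fun i => if f i then t i else ~` t i)). Qed.

Lemma cell_decides (I : finType) (t : I -> B) f i : decides (cell t f) (t i).
Proof. by rewrite /decides; have := cell_le t f i; case: (f i) => ->; rewrite ?orbT. Qed.

(* The cells are pairwise disjoint (two sign patterns differ somewhere) and
   cover \top (distributivity of meet over join). *)
Lemma cell_fpartition (I : finType) (t : I -> B) : is_fpartition (cell t).
Proof.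
split=> [f g hfg|].
  have : ~~ [forall i, f i == g i].
    by apply: contra hfg => /forallP h; apply/eqP/ffunP => i; apply/eqP.
  rewrite negb_forall => /existsP [i hi]; apply/eqP; rewrite -lex0.
  apply: le_trans (leI2 (cell_le t f i) (cell_le t g i)) _.
  by case: (f i) (g i) hi => [] [] //= _; rewrite ?meetxC ?meetCx.
rewrite /cell -(bigA_distr_bigA (fun i (b : bool) => if b then t i else ~` t i)) /=.
apply: big1 => i _.
by rewrite big_bool /= joinxC.
Qed.

End BooleanAlgebra.

Section Agreement.
Context {disp : Order.disp_t} {B : ctbDistrLatticeType disp}.
Variables (X : Type) (d : X -> X -> B).
Hypothesis hm : is_bmetric d.
Local Notation e x y := (~` d x y).

Lemma agree_refl x : e x x = \top.
Proof. by have [_ [h _]] := hm; rewrite (proj2 (h x x) erefl) compl0. Qed.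

Lemma agree_sym x y : e x y = e y x.
Proof. by have [h _] := hm; rewrite h. Qed.

Lemma agree_le_sym c x y : c <= e y x -> c <= e x y.
Proof. by rewrite agree_sym. Qed.

Lemma agree_top x y : e x y = \top -> x = y.
Proof. by have [_ [h _]] := hm; move=> hxy; apply/h; rewrite -[d x y]complK hxy compl1. Qed.

(* Transitivity of agreement: the triangle inequality, complemented. *)
Lemma agree_trans c x y z : c <= e x y -> c <= e y z -> c <= e x z.
Proof.
have [_ [_ h]] := hm; move=> hxy hyz.
apply: le_trans (_ : e x y `&` e y z <= e x z); first by rewrite lexI hxy.
by rewrite lexC complI !complK; exact: h.
Qed.

Lemma agree_chain c x x' y y' : c <= e x x' -> c <= e y y' ->
  (c <= e x y) = (c <= e x' y').
Proof.
move=> hx hy; apply/idP/idP => h.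
  by apply: agree_trans hy; apply: agree_trans h; rewrite agree_sym.
by apply: agree_trans (hx) _; apply: agree_trans h _; rewrite agree_sym.
Qed.

Lemma agree_of_disj a x y : a `&` d x y = \bot -> a <= e x y.
Proof. by move=> h; rewrite -disj_leC h. Qed.

Lemma convex_comb_unique n (xs : 'I_n.+1 -> X) a x y : is_partition a ->
  is_convex_comb d xs a x -> is_convex_comb d xs a y -> x = y.
Proof.
move=> ha hx hy; apply: agree_top; apply/le_anti; rewrite lex1 /=.
apply: (le_by_cover ha.2) => i; rewrite meet1x.
apply: (agree_trans (agree_of_disj (hx i))).
by rewrite agree_sym; exact: agree_of_disj (hy i).
Qed.

End Agreement.

Section Generation.
Context {disp : Order.disp_t} {B : ctbDistrLatticeType disp}.
Variables (X : Type) (d : X -> X -> B).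

Definition generates (k : nat) (s : 'I_k -> X) : Prop :=
  forall x, exists n (a : 'I_n.+1 -> B) (js : 'I_n.+1 -> 'I_k),
    is_partition a /\ is_convex_comb d (fun i => s (js i)) a x.

Lemma In_nth (y : X) (S : seq X) x :
  List.In x S -> exists2 j, (j < size S)%N & nth y S j = x.
Proof.
elim: S => [//|z S IH] /= [->|/IH [j hj <-]]; first by exists 0%N.
by exists j.+1.
Qed.

Lemma fin_gen_family : is_fin_gen d -> exists k (s : 'I_k -> X), generates s.
Proof.
case=> [[|y S] hS].
  exists 0%N, (fun j : 'I_0 => False_rect X (notF (ltn_ord j))).
  by move=> x; have [n [xs [a [_ [hin _]]]]] := hS x; case: (hin ord0).
exists (size (y :: S)), (fun j => nth y (y :: S) j) => x.
have [n [xs [a [ha [hin hx]]]]] := hS x.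
have /fin_all_exists [js hjs] :
    forall i, exists j : 'I_(size (y :: S)), nth y (y :: S) j = xs i.
  by move=> i; have [j hj <-] := In_nth y (hin i); exists (Ordinal hj).
by exists n, a, js; split => // i; rewrite hjs; exact: hx.
Qed.

Lemma cover_agree k (s : 'I_k -> X) : generates s ->
  forall x, \join_j ~` d x (s j) = \top.
Proof.
move=> hs x; have [n [a [js [ha hx]]]] := hs x.
apply/le_anti; rewrite lex1 /= -ha.2; apply/joinsP => i _.
apply: le_trans (agree_of_disj (hx i)) _.
exact: (@joins_sup _ _ _ (js i) predT (fun j => ~` d x (s j))).
Qed.

Lemma convex_fpartition : is_convex d -> forall (T : finType) (t0 : T)
  (a : T -> B) (xs : T -> X), is_fpartition a ->
  exists x, forall t, a t `&` d x (xs t) = \bot.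
Proof.
move=> hc T t0 a xs ha.
have hn : #|T| = (#|T|.-1).+1 by rewrite prednK //; apply/card_gt0P; exists t0.
set n := #|T|.-1 in hn.
pose f (i : 'I_n.+1) : T := enum_val (cast_ord (esym hn) i).
have hf t : f (cast_ord hn (enum_rank t)) = t by rewrite /f cast_ordK enum_rankK.
have [|x hx] := hc n (fun i => xs (f i)) (fun i => a (f i)).
  split=> [i j hij|].
    by apply: ha.1; apply: contra hij => /eqP/enum_val_inj/cast_ord_inj ->.
  apply/le_anti; rewrite lex1 /= -ha.2.
  by apply/joinsP => t _; rewrite -{1}(hf t); apply: joins_sup.
by exists x => t; have := hx (cast_ord hn (enum_rank t)); rewrite hf.
Qed.

End Generation.

(* Two distance-preserving maps that agree on a generating family agree
   everywhere, because images of convex combinations are convex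
   combinations with the same coefficients. *)
Lemma isometries_agree {disp : Order.disp_t} {B : ctbDistrLatticeType disp}
  (X Y : Type) (dX : X -> X -> B) (dY : Y -> Y -> B) (hmY : is_bmetric dY)
  (k : nat) (g : 'I_k -> X) (hg : generates dX g) (f1 f2 : X -> Y) :
  (forall x y, dY (f1 x) (f1 y) = dX x y) ->
  (forall x y, dY (f2 x) (f2 y) = dX x y) ->
  (forall l, f1 (g l) = f2 (g l)) -> forall x, f1 x = f2 x.
Proof.
move=> h1 h2 hfg x; have [n [a [js [ha hx]]]] := hg x.
apply: (convex_comb_unique hmY (xs := fun i => f1 (g (js i))) ha) => i.
  by rewrite h1; exact: hx.
by rewrite hfg h2; exact: hx.
Qed.

Section ClassMaps.
Variables (T : finType) (E : rel T).
Hypotheses (Erefl : reflexive E) (Esym : symmetric E) (Etrans : transitive E).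

(* Symmetry and transitivity in the forward form used by eauto below. *)
Let E_sym x y : E x y -> E y x. Proof. by rewrite Esym. Qed.
Let E_trans x y z : E x y -> E y z -> E x z. Proof. exact: Etrans. Qed.

Definition class_swap (a b x : T) : T :=
  if E x a then b else if E x b then a else x.

Lemma class_swap_rel a b : ~~ E a b ->
  forall x y, E (class_swap a b x) (class_swap a b y) = E x y.
Proof.
move=> /negbTE hab x y; rewrite /class_swap.
case hxa: (E x a); case hya: (E y a); case hxb: (E x b); case hyb: (E y b);
  apply/idP/idP => h;
  first [ solve [eauto 3 using E_trans, E_sym, Erefl]
        | exfalso; match goal with H : E ?u ?v = false |- _ =>
            (suff : E u v by rewrite H); solve [eauto 3 using E_trans, E_sym, Erefl] end ].
Qed.

Lemma class_swapK a b : ~~ E a b -> forall x, E (class_swap a b (class_swap a b x)) x.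
Proof.
move=> /negbTE hab x; rewrite /class_swap.
case hxa: (E x a); case hxb: (E x b); rewrite ?Erefl ?(Esym b a) ?hab ?hxa ?hxb //.
- by have := E_trans (E_sym hxa) hxb; rewrite hab.
- by rewrite Esym.
- by rewrite Esym.
Qed.

Lemma extend_class_map (ps : seq (T * T)) :
  {in ps &, forall p q, E p.1 q.1 = E p.2 q.2} ->
  exists tau : T -> T, [/\ forall i j, E (tau i) (tau j) = E i j,
    {in ps, forall p, E (tau p.1) p.2} & forall j, exists i, E (tau i) j].
Proof.
elim: ps => [|[a b] ps IH] hps.
  by exists id; split=> // j; exists j.
have [tau [tau_rel tau_ps tau_onto]] : exists tau : T -> T,
    [/\ forall i j, E (tau i) (tau j) = E i j,
        {in ps, forall p, E (tau p.1) p.2} & forall j, exists i, E (tau i) j].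
  by apply: IH => p q hp hq; apply: hps; rewrite inE ?hp ?hq orbT.
have [hab|hab] := boolP (E (tau a) b).
  by exists tau; split=> // p; rewrite inE => /orP [/eqP -> //|/tau_ps].
pose sw := class_swap (tau a) b.
exists (sw \o tau); split=> [i j|p|j] /=.
- by rewrite class_swap_rel // tau_rel.
- rewrite inE => /orP [/eqP -> | hp] /=; first by rewrite /sw /class_swap Erefl.
  have hp2 := tau_ps p hp.
  have link : E (tau p.1) (tau a) = E p.2 b.
    by rewrite tau_rel (hps p (a, b)) // inE ?hp ?eqxx ?orbT.
  have /negbTE nxa : ~~ E (tau p.1) (tau a).
    apply: contra hab => h; have hp2b : E p.2 b by rewrite -link.
    exact: E_trans (E_sym h) (E_trans hp2 hp2b).
  have /negbTE nxb : ~~ E (tau p.1) b.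
    apply: contra hab => h; have : E p.2 b := E_trans (E_sym hp2) h.
    by rewrite -link => h'; exact: E_trans (E_sym h') h.
  by rewrite /sw /class_swap nxa nxb.
- have [i hi] := tau_onto (sw j); exists i.
  by apply: E_trans (class_swapK hab j); rewrite class_swap_rel.
Qed.

End ClassMaps.

Section CellIsometry.
Context {disp : Order.disp_t} {B : ctbDistrLatticeType disp}.
Variables (W : Type) (dist : W -> W -> B).
Hypothesis hm : is_bmetric dist.
Local Notation e x y := (~` dist x y).
Variables (k : nat) (s : 'I_k -> W).
Hypothesis hs : generates dist s.
Variables (m : nat) (gv fv : 'I_m -> W).
Hypothesis hgf : forall l l', dist (fv l) (fv l') = dist (gv l) (gv l').

(* The points whose agreements with the generators a cell must decide. *)
Definition anchor (p : 'I_k + 'I_m + 'I_m) : W :=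
  match p with inl (inl i) => s i | inl (inr l) => gv l | inr l => fv l end.

Definition anchor_agreement (q : ('I_k + 'I_m + 'I_m) * 'I_k) : B :=
  e (anchor q.1) (s q.2).

Variable c : B.
Hypothesis hc : forall q, decides c (anchor_agreement q).

(* A cell deciding all agreements of x with the generators lies below one of
   them, since these agreements cover \top. *)
Lemma cell_anchor x : (forall j, decides c (e x (s j))) -> exists j, c <= e x (s j).
Proof.
move=> hx; have [n [_ [js _]]] := hs x.
have [/existsP //|] := boolP [exists j, c <= e x (s j)].
rewrite negb_exists => /forallP hn; exists (js ord0).
suff : c <= \bot by rewrite lex0 => /eqP ->; exact: le0x.
apply: (le_by_cover (cover_agree hs x)) => j.
by rewrite decided_meet // (negbTE (hn j)).
Qed.

Lemma cell_isometry : exists tau : 'I_k -> 'I_k,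
  [/\ forall i j, c `&` e (s (tau i)) (s (tau j)) = c `&` e (s i) (s j),
      forall j, exists i, c <= e (s (tau i)) (s j)
    & forall l j, c `&` e (gv l) (s j) <= e (fv l) (s (tau j))].
Proof.
have decS i j : decides c (e (s i) (s j)) := hc (inl (inl i), j).
have /fin_all_exists [a ha] : forall l, exists j, c <= e (gv l) (s j).
  by move=> l; apply: cell_anchor => j; exact: hc (inl (inr l), j).
have /fin_all_exists [b hb] : forall l, exists j, c <= e (fv l) (s j).
  by move=> l; apply: cell_anchor => j; exact: hc (inr l, j).
pose E : rel 'I_k := fun i j => c <= e (s i) (s j).
have Erefl : reflexive E by move=> i; rewrite /E (agree_refl hm) lex1.
have Esym : symmetric E by move=> i j; rewrite /E (agree_sym hm).
have Etrans : transitive E by move=> j i l; exact: (agree_trans hm).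
have pairs_rel : {in [seq (a l, b l) | l <- enum 'I_m] &,
    forall p q, E p.1 q.1 = E p.2 q.2}.
  move=> _ _ /mapP [l _ ->] /mapP [l' _ ->] /=; rewrite /E.
  by rewrite -(agree_chain hm (ha l) (ha l')) -(agree_chain hm (hb l) (hb l')) hgf.
have [tau [tau_rel tau_pairs tau_onto]] := extend_class_map Erefl Esym Etrans pairs_rel.
exists tau; split=> [i j|//|l j].
  by rewrite !decided_meet ?decS //; have := tau_rel i j; rewrite /E => ->.
rewrite decided_meet; last exact: hc (inl (inr l), j).
case: ifPn => [hlj|_]; last exact: le0x.
have hal : E (a l) j by apply: (agree_trans hm (agree_le_sym hm (ha l)) hlj).
have hpair : E (tau (a l)) (b l) by apply: (tau_pairs (a l, b l)); apply: map_f; rewrite mem_enum.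
have htau : E (tau (a l)) (tau j) by rewrite tau_rel.
rewrite /E in hpair htau.
exact (agree_trans hm (hb l) (agree_trans hm (agree_le_sym hm hpair) htau)).
Qed.

End CellIsometry.

Section Gluing.
Context {disp : Order.disp_t} {B : ctbDistrLatticeType disp}.
Variables (W : Type) (dist : W -> W -> B).
Hypotheses (hm : is_bmetric dist) (hcv : is_convex dist).
Local Notation e x y := (~` dist x y).
Variables (k : nat) (s : 'I_k -> W).
Hypothesis hs : generates dist s.
Variables (V : finType) (v0 : V) (P : V -> B) (tau : V -> 'I_k -> 'I_k).
Hypothesis hP : is_fpartition P.
Hypothesis tau_iso :
  forall v i j, P v `&` e (s (tau v i)) (s (tau v j)) = P v `&` e (s i) (s j).
Hypothesis tau_onto : forall v j, exists i, P v <= e (s (tau v i)) (s j).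

Definition glued (x y : W) : Prop :=
  forall v j, P v `&` e x (s j) <= e y (s (tau v j)).

Lemma glued_cell x x' y y' v j j' c : glued x y -> glued x' y' ->
  c <= P v -> c <= e x (s j) -> c <= e x' (s j') -> (c <= e x x') = (c <= e y y').
Proof.
move=> gy gy' cP cx cx'.
have cy : c <= e y (s (tau v j)) by apply: le_trans (gy v j); rewrite lexI cP.
have cy' : c <= e y' (s (tau v j')) by apply: le_trans (gy' v j'); rewrite lexI cP.
rewrite (agree_chain hm cx cx') (agree_chain hm cy cy').
(* Since c <= P v, bounding by z is the same as bounding by P v `&` z. *)
by rewrite -[LHS]andTb -cP -lexI -tau_iso lexI cP.
Qed.

Lemma glued_agree x x' y y' : glued x y -> glued x' y' -> e y y' = e x x'.
Proof.
move=> gy gy'.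
have by_cells (c z : B) :
    (forall v j j', c `&` P v `&` e x (s j) `&` e x' (s j') <= z) -> c <= z.
  move=> h; apply: (le_by_cover hP.2) => v.
  apply: (le_by_cover (cover_agree hs x)) => j.
  by apply: (le_by_cover (cover_agree hs x')) => j'; exact: h.
apply/le_anti/andP; split; apply: by_cells => v j j'.
  by rewrite (glued_cell gy gy' (v := v) (j := j) (j' := j')); meet_proj.
by rewrite -(glued_cell gy gy' (v := v) (j := j) (j' := j')); meet_proj.
Qed.

Lemma glued_unique x y y' : glued x y -> glued x y' -> y = y'.
Proof. by move=> gy gy'; apply: (agree_top hm); rewrite (glued_agree gy gy') (agree_refl hm). Qed.

Lemma glued_inj x x' y : glued x y -> glued x' y -> x = x'.
Proof. by move=> gx gx'; apply: (agree_top hm); rewrite -(glued_agree gx gx') (agree_refl hm). Qed.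

(* Existence: combine the s (tau v (js i)) along the product of P with a
   decomposition of x. *)
Lemma glued_exists x : exists y, glued x y.
Proof.
have [n [a [js [ha hx]]]] := hs x.
have [y hy] := convex_fpartition hcv (v0, ord0) (fun t => s (tau t.1 (js t.2)))
  (fpartition_prod hP ha).
exists y => v j; apply: (le_by_cover ha.2) => i.
have hxi := agree_of_disj (hx i); have hyi := agree_of_disj (hy (v, i)); simpl in hyi.
have hcell : P v `&` e x (s j) `&` a i <= P v `&` e (s (js i)) (s j).
  rewrite lexI; apply/andP; split; first by meet_proj.
  apply: (agree_trans hm (y := x)); last by meet_proj.
  by apply: (agree_le_sym hm); apply: le_trans _ hxi; meet_proj.
apply: (agree_trans hm (y := s (tau v (js i)))).
  by apply: le_trans _ hyi; meet_proj.
by apply: le_trans hcell _; rewrite -tau_iso leIr.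
Qed.

(* Surjectivity: combine preimages of the generators used by y. *)
Lemma glued_onto y : exists x, glued x y.
Proof.
have [n [b [js [hb hy]]]] := hs y.
have /fin_all_exists [r hr] :
    forall t : V * 'I_n.+1, exists i, P t.1 <= e (s (tau t.1 i)) (s (js t.2)).
  by move=> t; exact: tau_onto.
have hPb := fpartition_prod hP hb.
have [x hx] := convex_fpartition hcv (v0, ord0) (fun t => s (r t)) hPb.
have [y' gy'] := glued_exists x.
exists x; suff -> : y = y' by [].
apply: (agree_top hm); apply/le_anti; rewrite lex1 /=.
apply: (le_by_cover hPb.2) => -[v i] /=; rewrite meet1x.
have hxi := agree_of_disj (hx (v, i)); simpl in hxi.
apply: (agree_trans hm (y := s (js i))).
  by apply: le_trans _ (agree_of_disj (hy i)); meet_proj.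
apply: (agree_trans hm (y := s (tau v (r (v, i))))).
  by apply: (agree_le_sym hm); apply: le_trans _ (hr (v, i)); meet_proj.
apply: (agree_le_sym hm); apply: le_trans _ (gy' v (r (v, i))).
by rewrite lexI hxi andbT; meet_proj.
Qed.

Definition glue (x : W) : W :=
  proj1_sig (constructive_indefinite_description _ (glued_exists x)).

Lemma glueP x : glued x (glue x).
Proof. exact: proj2_sig (constructive_indefinite_description _ (glued_exists x)). Qed.

Lemma glue_eq x y : glued x y -> glue x = y.
Proof. exact: glued_unique (glueP x). Qed.

Lemma glue_isometry : is_isometry dist dist glue.
Proof.
split; last by move=> x y; apply: compl_inj; exact: glued_agree (glueP x) (glueP y).
pose inv y := proj1_sig (constructive_indefinite_description _ (glued_onto y)).
have invP y : glued (inv y) y := proj2_sig (constructive_indefinite_description _ (glued_onto y)).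
exists inv => [x|y]; first exact: glued_inj (invP (glue x)) (glueP x).
exact: glue_eq (invP y).
Qed.

End Gluing.

Theorem theorem2 (disp : Order.disp_t) (B : ctbDistrLatticeType disp)
  (W : Type) (dist : W -> W -> B) (U V : W -> Prop)
  (hW : is_CFG dist)
  (hU : is_CFG (@restr_dist _ _ W dist U))
  (hV : is_CFG (@restr_dist _ _ W dist V))
  (F : {x | U x} -> {x | V x})
  (hF : is_isometry (@restr_dist _ _ W dist U) (@restr_dist _ _ W dist V) F) :
  exists F' : W -> W, is_isometry dist dist F' /\
    forall u : {x | U x}, F' (proj1_sig u) = proj1_sig (F u).
Proof.
have [hm [hcv hWgen]] := hW.
have [k [s hs]] := fin_gen_family hWgen.
have [m [g hg]] := fin_gen_family hU.2.2.
pose gv l := proj1_sig (g l); pose fv l := proj1_sig (F (g l)).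
have hgf l l' : dist (fv l) (fv l') = dist (gv l) (gv l') := hF.2 (g l) (g l').
have [tau htau] := fin_all_exists (fun v => cell_isometry hm hs hgf (cell_decides _ v)).
have tau_iso v := let: And3 h _ _ := htau v in h.
have tau_onto v := let: And3 _ h _ := htau v in h.
pose F' := glue hm hcv hs [ffun=> false] (cell_fpartition _) tau_iso.
have F'_iso : is_isometry dist dist F' by apply: glue_isometry; exact: tau_onto.
exists F'; split=> //.
apply: (isometries_agree hm hg (f1 := fun u => F' (proj1_sig u))
  (f2 := fun u => proj1_sig (F u))) => [x y|x y|l]; first exact: F'_iso.2.
  exact: hF.2.
by apply: glue_eq => v j; have [_ _] := htau v; apply.
Qed.
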